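(* Consider a discrete-time model $t=0,1,2,\ldots$ of a company's Short Term Net Financial Position (STNFP) $D_{S,t}$, along a fixed realization, evolving by $$D_{S,t}=D_{S,t-1}-C_t,\qquad C_t=F_t-S_t,\qquad S_t=c_t+I_{L,t}+I_{S,t},\qquad t\ge 1,$$ where $F_t$ is the free cash flow at time $t$, $c_t+I_{L,t}$ is the term-debt service at time $t$, and $I_{S,t}=\mathbf r\, D_{S,t-1}$ is the interest paid at time $t$ on the STNFP outstanding at the beginning of the period, with a constant interest rate $\mathbf r\in(0,1)$. Assume there is a time $t_{SS}$ such that $F_t=F$ is constant for all $t\ge t_{SS}$, and assume $K:=c_t+I_{L,t}$ is the same constant for all $t$. If at some time $\bar t\ge t_{SS}$ the STNFP is decreasing, i.e. $D_{S,\bar t}< D_{S,\bar t-1}$, then $D_{S,t}< D_{S,t-1}$ for all $t\ge\bar t$.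
   Context: $D_{S,t}$ denotes the short-term net financial position (short-term debt) at time $t$; $C_t$ is its change (cash surplus) at time $t$. All quantities are real numbers along a given realization of the random cash flows. *)

From Stdlib Require Import Reals.
Open Scope R_scope.

(* For t >= max(t_SS, 1) the model collapses to the affine recurrence
   D_{S,t} = (1 + r) D_{S,t-1} + (K - F), so successive increments satisfy
   D_{S,t+1} - D_{S,t} = (1 + r) (D_{S,t} - D_{S,t-1}); since 1 + r > 0 the sign
   of the increment is preserved from t_bar on. *)
From Stdlib Require Import Reals Lra Lia.
Open Scope R_scope.

Lemma affine_recurrence_increment (x : nat -> R) (a b : R) (n : nat) :
  x (S (S n)) = a * x (S n) + b -> x (S n) = a * x n + b ->
  x (S (S n)) - x (S n) = a * (x (S n) - x n).
Proof. intros h2 h1. rewrite h2, h1. ring. Qed.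

Lemma affine_recurrence_decreasing (x : nat -> R) (a b : R) (m : nat) :
  0 < a -> (forall n, (m <= n)%nat -> x (S n) = a * x n + b) ->
  x (S m) < x m -> forall n, (m <= n)%nat -> x (S n) < x n.
Proof.
  intros ha hrec hdec n hn.
  induction hn as [|n hn IH]; [exact hdec|].
  assert (hinc := affine_recurrence_increment x a b n
                    (hrec (S n) ltac:(lia)) (hrec n hn)).
  assert (hneg : a * (x (S n) - x n) < 0)
    by (apply Rmult_pos_neg; lra).
  lra.
Qed.

Lemma stnfp_affine_recurrence
  (DS C F S c IL IS : nat -> R) (r Fss K : R) (tSS : nat)
  (hD : forall t : nat, (1 <= t)%nat -> DS t = DS (t - 1)%nat - C t)
  (hC : forall t : nat, (1 <= t)%nat -> C t = F t - S t)
  (hS : forall t : nat, (1 <= t)%nat -> S t = c t + IL t + IS t)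
  (hIS : forall t : nat, (1 <= t)%nat -> IS t = r * DS (t - 1)%nat)
  (hF : forall t : nat, (tSS <= t)%nat -> F t = Fss)
  (hK : forall t : nat, c t + IL t = K) :
  forall n : nat, (tSS <= Datatypes.S n)%nat ->
    DS (Datatypes.S n) = (1 + r) * DS n + (K - Fss).
Proof.
  intros n hn.
  assert (h1 : (1 <= Datatypes.S n)%nat) by lia.
  rewrite (hD _ h1), (hC _ h1), (hS _ h1), (hIS _ h1), hK, (hF _ hn).
  replace (Datatypes.S n - 1)%nat with n by lia.
  ring.
Qed.

Theorem corollaryA1
  (DS C F S c IL IS : nat -> R) (r Fss K : R) (tSS tbar : nat)
  (hr : 0 < r < 1)
  (hD : forall t : nat, (1 <= t)%nat -> DS t = DS (t - 1)%nat - C t)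
  (hC : forall t : nat, (1 <= t)%nat -> C t = F t - S t)
  (hS : forall t : nat, (1 <= t)%nat -> S t = c t + IL t + IS t)
  (hIS : forall t : nat, (1 <= t)%nat -> IS t = r * DS (t - 1)%nat)
  (hF : forall t : nat, (tSS <= t)%nat -> F t = Fss)
  (hK : forall t : nat, c t + IL t = K)
  (htbar : (tSS <= tbar)%nat)
  (htbar1 : (1 <= tbar)%nat)
  (hdec : DS tbar < DS (tbar - 1)%nat) :
  forall t : nat, (tbar <= t)%nat -> DS t < DS (t - 1)%nat.
Proof.
  destruct tbar as [|m]; [lia|].
  replace (Datatypes.S m - 1)%nat with m in hdec by lia.
  assert (hrec := stnfp_affine_recurrence DS C F S c IL IS r Fss K tSS
                    hD hC hS hIS hF hK).
  intros [|n] hn; [lia|].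
  replace (Datatypes.S n - 1)%nat with n by lia.
  apply (affine_recurrence_decreasing DS (1 + r) (K - Fss) m); try lra; try lia.
  intros k hk. apply hrec. lia.
Qed.
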